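(* Let $\Sigma\subseteq\widehat{\Sigma}$ be alphabets with $\Pi=\widehat{\Sigma}\setminus\Sigma$ finite, and let $R\subseteq\Sigma^*\times\Sigma^*$. If $D$ is a family of $\widehat{\Sigma}$-defining relations for $\Pi$ whose derived generator graph $\Gamma_D(D)$ is acyclic, then there exists a sequence of exactly $|\Pi|$ $\mathbf{Gen}(+)$ transformations between $\langle\Sigma\mid R\rangle$ and $\langle\widehat{\Sigma}\mid R\cup D\rangle$.
   Context: For an alphabet $\Sigma$, $\Sigma^*$ is the free monoid of words over $\Sigma$. For $R\subseteq\Sigma^*\times\Sigma^*$ (elements written $q\approx r$), the presentation $\langle\Sigma\mid R\rangle$ denotes the quotient of $\Sigma^*$ by the smallest congruence containing $R$. A $\mathbf{Gen}(+)$ transformation passes from a presentation $\langle\Sigma\mid R\rangle$ to $\langle\Sigma\cup\{x\}\mid R\cup\{x\approx w\}\rangle$ where $x\notin\Sigma$ is a new symbol and $w\in\Sigma^*$; a sequence of such transformations between two presentations is a chain of presentations starting at the first and ending at the second, each obtained from the previous one by one such transformation. A $\Sigma$-defining relation for $x\in\Sigma$ is a relation $x\approx w$ with $w\in\Sigma^*$; a family of $\Sigma$-defining relations for $\Pi\subseteq\Sigma$ is a set $\{r_x\mid x\in\Pi\}$ where each $r_x$ is a $\Sigma$-defining relation for $x$. The derived generator graph $\Gamma_D(D)$ of such a family $D$ is the directed graph with vertex set $\Pi$ and an edge $(x,y)$ whenever $y$ occurs in the right-hand side $w$ of the relation $x\approx w$ in $D$. A directed graph is acyclic if it has no directed path of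 positive length from a vertex to itself. *)

From mathcomp Require Import all_boot.
From Stdlib Require Import Relation_Operators.
Set Implicit Arguments. Unset Strict Implicit. Unset Printing Implicit Defensive.

Section Pres.
Variable A : eqType.

Definition word_over (S : A -> Prop) (w : seq A) : Prop :=
  forall a, a \in w -> S a.

Record presentation := Pres {
  p_alph : A -> Prop;
  p_rels : seq A * seq A -> Prop }.

Definition GenPlus (P Q : presentation) : Prop :=
  exists (x : A) (w : seq A),
    ~ p_alph P x /\ word_over (p_alph P) w /\
    p_alph Q = (fun a => p_alph P a \/ a = x) /\
    p_rels Q = (fun r => p_rels P r \/ r = ([:: x], w)).

Definition GenPlus_seq (n : nat) (P Q : presentation) : Prop :=
  exists f : nat -> presentation,
    f 0 = P /\ f n = Q /\ forall i, i < n -> GenPlus (f i) (f i.+1).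

Definition defining_family (Shat : A -> Prop) (Pi : seq A) (rhs : A -> seq A) : Prop :=
  forall x, x \in Pi -> word_over Shat (rhs x).

Definition family_rels (Pi : seq A) (rhs : A -> seq A) : seq A * seq A -> Prop :=
  fun r => exists2 x, x \in Pi & r = ([:: x], rhs x).

Definition dgg_edge (Pi : seq A) (rhs : A -> seq A) (x y : A) : Prop :=
  x \in Pi /\ y \in Pi /\ y \in rhs x.

Definition acyclic (E : A -> A -> Prop) : Prop :=
  forall x, ~ clos_trans A E x x.

End Pres.

(** Acyclicity of the derived generator graph yields a topological order
    x_1, ..., x_n of Pi in which the right-hand side of each x_i only uses
    letters of Sigma and x_1, ..., x_(i-1): a finite acyclic graph always has
    a vertex without successors, which can be removed first.  Adjoining the
    new generators in this order, each together with its defining relation,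
    is a chain of n Gen(+) transformations. *)
From Stdlib Require Import Relation_Operators Classical FunctionalExtensionality PropExtensionality.
From mathcomp Require Import all_boot.
Set Implicit Arguments. Unset Strict Implicit.

Lemma pred_ext (T : Type) (P Q : T -> Prop) : (forall t, P t <-> Q t) -> P = Q.
Proof.
by move=> PQ; apply: functional_extensionality => t; apply: propositional_extensionality.
Qed.

Section SuccessorCycle.
Variables (T : eqType) (E : T -> T -> Prop) (L : seq T) (s : T -> T).
Hypothesis s_closed : forall y, y \in L -> s y \in L /\ E y (s y).

Lemma iter_successor_in k y : y \in L -> iter k s y \in L.
Proof. by elim: k => [|k IH] //= /IH /s_closed[]. Qed.

Lemma clos_trans_iter_successor k y : y \in L -> clos_trans T E y (iter k.+1 s y).
Proof.
elim: k y => [|k IH] y yL; have [syL Eysy] := s_closed yL; first exact: t_step.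
by apply: t_trans (t_step _ _ _ _ Eysy) _; rewrite iterSr; apply: IH.
Qed.

Lemma iter_successor_collision d : d \in L ->
  exists i j, i < j /\ iter i s d = iter j s d.
Proof.
move=> dL; have : ~~ uniq (traject s d (size L).+1).
  apply: contraFN (ltnn (size L)) => /uniq_leq_size; rewrite size_traject; apply.
  by move=> y /trajectP[k _ ->]; apply: iter_successor_in.
case/(uniqPn d)=> i [j []]; rewrite size_traject => ij jn.
by rewrite !nth_traject // ?(ltn_trans ij) //; exists i, j.
Qed.

Lemma successor_closed_cycle : L != [::] -> exists x, clos_trans T E x x.
Proof.
move=> L_nil; have [d dL] : exists d, d \in L.
  by case: L L_nil => // d L' _; exists d; rewrite inE eqxx.
have [i [j [ij eij]]] := iter_successor_collision dL.
exists (iter i s d); rewrite [in X in clos_trans _ _ _ X]eij -(subnK ij) iterD.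
by rewrite iterS -iterSr; apply/clos_trans_iter_successor/iter_successor_in.
Qed.

End SuccessorCycle.

Section TopologicalOrder.
Variables (A : eqType) (Pi : seq A) (rhs : A -> seq A).
Hypothesis Pi_acyclic : acyclic (dgg_edge Pi rhs).

Lemma exists_sink (L : seq A) : L != [::] -> {subset L <= Pi} ->
  exists2 x, x \in L & forall a, a \in rhs x -> a \notin L.
Proof.
move=> L_nil LPi; case: (boolP (has (fun x => ~~ has (mem (rhs x)) L) L)).
  by case/hasP=> x xL /hasPn rhs_out; exists x => // a; apply/contraL/rhs_out.
move/hasPn=> succ; exfalso.
pose s x := nth x [seq y <- L | y \in rhs x] 0.
have s_closed x : x \in L -> s x \in L /\ dgg_edge Pi rhs x (s x).
  move=> xL; have : s x \in [seq y <- L | y \in rhs x].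
    by apply: mem_nth; rewrite lt0n size_eq0 -has_filter -[has _ _]negbK succ.
  by rewrite mem_filter => /andP[sxr sxL]; do !split; rewrite ?LPi.
by have [y] := successor_closed_cycle s_closed L_nil; apply: Pi_acyclic.
Qed.

Lemma exists_topological_order (P L : seq A) : Pi =i P ++ L ->
  exists2 ord, perm_eq ord L & forall pre x suf, ord = pre ++ x :: suf ->
    forall a, a \in rhs x -> a \in Pi -> a \in P ++ pre.
Proof.
have [n] := ubnP (size L); elim: n P L => // n IH P L /ltnSE sizeL PiPL.
have [->|L_nil] := eqVneq L [::].
  by exists [::] => // -[].
have [x xL x_sink] : exists2 x, x \in L & forall a, a \in rhs x -> a \notin L.
  by apply: exists_sink => // y yL; rewrite PiPL mem_cat yL orbT.
have perm_x := perm_to_rem xL.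
have [||ord ord_perm ord_top] := IH (P ++ [:: x]) (rem x L).
- by rewrite size_rem // prednK ?lt0n ?size_eq0 // in sizeL *.
- by move=> a; rewrite PiPL -catA (perm_mem (perm_cat (perm_refl P) perm_x)).
exists (x :: ord); first by rewrite (permPr perm_x) perm_cons.
case=> [|y pre] z suf /= [<-].
  by move=> _ a /x_sink aL; rewrite PiPL mem_cat (negbTE aL) orbF cats0.
by move=> /ord_top; rewrite -catA.
Qed.

End TopologicalOrder.

Lemma GenPlus_seq_snoc (A : eqType) n (P Q Q' : presentation A) :
  GenPlus_seq n P Q -> GenPlus Q Q' -> GenPlus_seq n.+1 P Q'.
Proof.
move=> [f [f0 [fn f_step]]] QQ'.
exists (fun i => if i <= n then f i else Q'); rewrite leq0n ltnn; do !split => //.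
move=> i; rewrite ltnS => i_le; rewrite i_le; case: ltnP => [/f_step // | n_le_i].
have -> : i = n by apply/eqP; rewrite eqn_leq i_le.
by rewrite fn.
Qed.

Lemma family_rels_rcons (A : eqType) (s : seq A) x rhs r :
  family_rels (rcons s x) rhs r <-> family_rels s rhs r \/ r = ([:: x], rhs x).
Proof.
split=> [[y] | [[y ys ->] | ->]].
- by rewrite mem_rcons inE => /predU1P[-> ->|ys ->]; [right|left; exists y].
- by exists y; rewrite // mem_rcons inE ys orbT.
- by exists x; rewrite // mem_rcons mem_head.
Qed.

Section PartialPresentations.
Variables (A : eqType) (Sigma : A -> Prop) (R : seq A * seq A -> Prop) (rhs : A -> seq A).

Definition partial_pres (s : seq A) : presentation A :=
  Pres (fun a => Sigma a \/ a \in s) (fun r => R r \/ family_rels s rhs r).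

Definition dependency_ordered (ord : seq A) : Prop :=
  forall pre x suf, ord = pre ++ x :: suf ->
    word_over (fun a => Sigma a \/ a \in pre) (rhs x).

Lemma dependency_ordered_rcons s x : dependency_ordered (rcons s x) ->
  dependency_ordered s /\ word_over (fun a => Sigma a \/ a \in s) (rhs x).
Proof.
move=> dep_sx; split=> [pre y suf s_eq|]; last by apply: (dep_sx s x [::]); rewrite cats1.
by apply: (dep_sx pre y (rcons suf x)); rewrite s_eq rcons_cat.
Qed.

Lemma GenPlus_partial_rcons s x : ~ Sigma x -> x \notin s ->
  word_over (fun a => Sigma a \/ a \in s) (rhs x) ->
  GenPlus (partial_pres s) (partial_pres (rcons s x)).
Proof.
move=> xSigma xs rhs_x; exists x, (rhs x); do !split => //=.
- by case=> //; apply/negP.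
- apply/pred_ext => a; rewrite mem_rcons in_cons.
  split=> [[|/predU1P[]] | [[|]|->]]; by [auto | right; apply/predU1P; auto].
- by apply: pred_ext => r; rewrite family_rels_rcons; tauto.
Qed.

Lemma partial_pres_nil : partial_pres [::] = Pres Sigma R.
Proof.
congr Pres; apply: pred_ext => t; split; auto; case=> // [[x]].
by rewrite in_nil.
Qed.

Lemma GenPlus_seq_partial ord : uniq ord -> (forall x, x \in ord -> ~ Sigma x) ->
  dependency_ordered ord -> GenPlus_seq (size ord) (Pres Sigma R) (partial_pres ord).
Proof.
elim/last_ind: ord => [_ _ _ | s x IH].
  by exists (fun=> Pres Sigma R); rewrite partial_pres_nil.
rewrite rcons_uniq size_rcons => /andP[xs s_uniq] new_sx /dependency_ordered_rcons[dep_s rhs_x].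
apply: GenPlus_seq_snoc (GenPlus_partial_rcons _ xs rhs_x).
  by apply: IH => // y ys; apply: new_sx; rewrite mem_rcons inE ys orbT.
by apply: new_sx; rewrite mem_rcons mem_head.
Qed.

Lemma partial_pres_full (Sigmahat : A -> Prop) (Pi ord : seq A) :
  (forall a, Sigma a -> Sigmahat a) -> (forall a, a \in Pi <-> Sigmahat a /\ ~ Sigma a) ->
  ord =i Pi -> partial_pres ord = Pres Sigmahat (fun r => R r \/ family_rels Pi rhs r).
Proof.
move=> Sigma_hat Pi_new ord_Pi; congr Pres; apply: pred_ext.
  move=> a; rewrite ord_Pi Pi_new; have := classic (Sigma a); intuition.
move=> r; split=> [] [|[x xs ->]]; auto; right; exists x => //.
  by rewrite -ord_Pi.
by rewrite ord_Pi.
Qed.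

End PartialPresentations.

Theorem theorem7 (A : eqType) (Sigma Sigmahat : A -> Prop) (Pi : seq A)
  (R : seq A * seq A -> Prop) (rhs : A -> seq A) :
  (forall a, Sigma a -> Sigmahat a) ->
  uniq Pi ->
  (forall a, a \in Pi <-> (Sigmahat a /\ ~ Sigma a)) ->
  (forall q r, R (q, r) -> word_over Sigma q /\ word_over Sigma r) ->
  defining_family Sigmahat Pi rhs ->
  acyclic (dgg_edge Pi rhs) ->
  GenPlus_seq (size Pi) (Pres Sigma R)
    (Pres Sigmahat (fun r => R r \/ family_rels Pi rhs r)).
Proof.
(* Gen(+) puts no condition on the relations already present. *)
move=> Sigma_hat Pi_uniq Pi_new _ D_defining Pi_acyclic.
have [ord ord_Pi ord_top] := exists_topological_order Pi_acyclic (P := [::]) (L := Pi) (frefl _).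
have ord_dep : dependency_ordered Sigma rhs ord.
  move=> pre x suf ord_eq a ax; have [|a_new] := classic (Sigma a); [by left | right].
  have xPi : x \in Pi by rewrite -(perm_mem ord_Pi) ord_eq mem_cat mem_head orbT.
  by apply: (ord_top _ _ _ ord_eq a ax); apply/Pi_new; split; first exact: D_defining xPi a ax.
rewrite -(partial_pres_full R rhs Sigma_hat Pi_new (perm_mem ord_Pi)) -(perm_size ord_Pi).
apply: GenPlus_seq_partial => //; first by rewrite (perm_uniq ord_Pi).
by move=> x; rewrite (perm_mem ord_Pi) => /Pi_new[].
Qed.
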